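(* Every almost reciprocal Puiseux monoid satisfies the ascending chain condition on principal ideals (ACCP).
   Context: A Puiseux monoid is an additive submonoid of $(\mathbb{Q}_{\ge 0},+)$. An almost reciprocal Puiseux monoid is a monoid of the form $\langle \frac{c_n}{d_n} \mid n \in \mathbb{N} \rangle$, where $(d_n)_{n\ge 1}$ is a strictly increasing sequence of positive integers whose terms are pairwise relatively prime, and $(c_n)_{n \ge 1}$ is a sequence of positive integers with $\gcd(c_n,d_n)=1$ for every $n$. A principal ideal of a monoid $M$ is a set $r + M = \{r+q \mid q \in M\}$ with $r \in M$; $M$ satisfies the ACCP if every ascending chain $r_1 + M \subseteq r_2 + M \subseteq \cdots$ of principal ideals is eventually constant. *)

From mathcomp Require Import all_boot all_order all_algebra.
Set Implicit Arguments. Unset Strict Implicit. Unset Printing Implicit Defensive.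
Import Order.TTheory GRing.Theory Num.Theory.
Local Open Scope ring_scope.

Definition gen_monoid (g : nat -> rat) : rat -> Prop :=
  fun q => exists s : seq nat, q = \sum_(i <- s) g i.

Definition in_pideal (M : rat -> Prop) (r x : rat) : Prop :=
  exists q, M q /\ x = r + q.

Definition ACCP (M : rat -> Prop) : Prop :=
  forall r : nat -> rat,
    (forall k, M (r k)) ->
    (forall k x, in_pideal M (r k) x -> in_pideal M (r k.+1) x) ->
    exists N, forall k, (N <= k)%N ->
      forall x, in_pideal M (r k) x <-> in_pideal M (r N) x.

Definition almost_reciprocal_data (c d : nat -> nat) : Prop :=
  [/\ (forall n, 0 < d n)%N,
      (forall m n, (m < n)%N -> (d m < d n)%N),
      (forall m n, m <> n -> coprime (d m) (d n)),
      (forall n, 0 < c n)%N &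
      (forall n, coprime (c n) (d n))].

Definition almost_reciprocal_PM (c d : nat -> nat) : rat -> Prop :=
  gen_monoid (fun n => (c n)%:R / (d n)%:R).

From mathcomp Require Import all_boot all_order all_algebra.
From mathcomp Require Import zify ring.
From Stdlib Require Import Classical.

Set Implicit Arguments.
Unset Strict Implicit.
Unset Printing Implicit Defensive.
Import Order.TTheory GRing.Theory Num.Theory.

(* Write an element of M as q = sum_n x_n c_n/d_n.  Clearing denominators and
   reducing modulo d_n shows, since the d_n are pairwise coprime and
   gcd(c_n, d_n) = 1, that the residues x_n mod d_n depend only on q.  Hence so
   do R(q) = sum_n (x_n mod d_n) and the natural number
   N(q) = sum_n (x_n div d_n) c_n, the integer part in
   q = N(q) + sum_n (x_n mod d_n) c_n/d_n.  If q = q' + t with t a sum of k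
   atoms, then N(q') <= N(q), and N(q') = N(q) forces R(q') + k = R(q).  So
   along an ascending chain of principal ideals r_k + M the pair (N, R)(r_k)
   is lexicographically nonincreasing, and constant only where r_k is; such a
   sequence in nat x nat is eventually constant. *)

Lemma nonincreasing_nat_stationary (f : nat -> nat) :
  (forall k, f k.+1 <= f k) -> exists K, forall k, K <= k -> f k = f K.
Proof.
move=> f_dec.
have f_le : {homo f : i j / i <= j >-> j <= i}.
  by apply: homo_leq => // y x z le_yx le_zy; apply: leq_trans le_zy le_yx.
suff stat n K : f K <= n -> exists K', forall k, K' <= k -> f k = f K'.
  exact: (stat _ 0).
elim: n K => [|n IH] K fK.
  by exists K => k /f_le; lia.
have [[k [Kk fk]] | no_drop] := classic (exists k, K <= k /\ f k < f K).
  by apply: (IH k); lia.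
exists K => k Kk; apply/eqP; rewrite eqn_leq f_le // leqNgt.
by apply/negP => fk; apply: no_drop; exists k.
Qed.

Lemma lex_nonincreasing_stationary (f g : nat -> nat) :
  (forall k, f k.+1 <= f k) -> (forall k, f k.+1 = f k -> g k.+1 <= g k) ->
  exists K, forall k, K <= k -> f k = f K /\ g k = g K.
Proof.
move=> f_dec g_dec; have [K1 f_stat] := nonincreasing_nat_stationary f_dec.
have [|K2 g_stat] := @nonincreasing_nat_stationary (fun j => g (K1 + j)).
  by move=> j; rewrite addnS; apply: g_dec; rewrite -addnS !f_stat ?leq_addr.
exists (K1 + K2) => k K_k; have K1_k : K1 <= k by lia.
rewrite !f_stat ?leq_addr //; split=> //.
by rewrite -(subnKC K1_k) g_stat // leq_subRL.
Qed.

Lemma stationary_of_step (T : Type) (u : nat -> T) K :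
  (forall k, K <= k -> u k.+1 = u k) -> forall k, K <= k -> u k = u K.
Proof.
move=> u_step k /subnK <-; elim: (k - K) => // i IH.
by rewrite addSn u_step ?leq_addl.
Qed.

Lemma eqn_modMr_coprime d k x y :
  coprime k d -> (x * k == y * k %[mod d]) = (x == y %[mod d]).
Proof.
move=> k_d; wlog le_yx : x y / y <= x.
  by move=> sym; case: (leqP y x) => [|/ltnW] /sym //; rewrite eq_sym => ->.
rewrite !eqn_mod_dvd ?leq_mul2r ?le_yx ?orbT // -mulnBl Gauss_dvdl //.
by rewrite coprime_sym.
Qed.

Lemma sum_seq_count (V : nmodType) (F : nat -> V) (s : seq nat) B :
  {in s, forall i, i < B} ->
  (\sum_(i <- s) F i = \sum_(m < B) F m *+ count_mem (m : nat) s)%R.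
Proof.
elim: s => [_|i s IH s_lt]; first by rewrite big_nil big1.
have i_lt : i < B by apply: s_lt; rewrite mem_head.
rewrite big_cons IH => [|j j_s]; last by apply: s_lt; rewrite inE j_s orbT.
under [RHS]eq_bigr do rewrite /= mulrnDr.
rewrite big_split /=; congr (_ + _)%R.
rewrite (bigD1 (Ordinal i_lt)) //= eqxx big1 ?addr0 // => m.
by rewrite eq_sym -val_eqE /= => /negbTE ->.
Qed.

Lemma sum_count_size (s : seq nat) B :
  {in s, forall i, i < B} -> \sum_(m < B) count_mem (m : nat) s = size s.
Proof.
move=> s_lt; have := sum_seq_count (fun _ => 1%N) s_lt.
rewrite sum1_size => ->; apply: eq_bigr => m _.
by rewrite -[LHS]natn.
Qed.

Definition index_bound (s : seq nat) : nat := \max_(i <- s) i.+1.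

Lemma index_bound_gt s : {in s, forall i, i < index_bound s}.
Proof.
by move=> i i_s; rewrite /index_bound (@leq_bigmax_seq _ s predT (fun i => i.+1) i).
Qed.

Lemma index_bound_cat s1 s2 : index_bound (s1 ++ s2) = maxn (index_bound s1) (index_bound s2).
Proof. by rewrite /index_bound big_cat. Qed.

Lemma sum_count_widen (F : nat -> nat -> nat) (s : seq nat) B :
  (forall m, F m 0 = 0) -> index_bound s <= B ->
  \sum_(m < B) F m (count_mem (m : nat) s) =
  \sum_(m < index_bound s) F m (count_mem (m : nat) s).
Proof.
move=> F0 le_sB; rewrite [RHS](big_ord_widen _ (fun m => F m (count_mem m s)) le_sB).
rewrite [RHS]big_mkcond /=.
apply: eq_bigr => m _; case: ltnP => // le_m.
have /count_memPn -> // : (m : nat) \notin s.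
by apply/negP => /index_bound_gt; rewrite ltnNge le_m.
Qed.

Section AlmostReciprocal.
Variables c d : nat -> nat.
Hypothesis d_gt0 : forall n, 0 < d n.
Hypothesis c_gt0 : forall n, 0 < c n.
Hypothesis d_coprime : forall m n, m <> n -> coprime (d m) (d n).
Hypothesis cd_coprime : forall n, coprime (c n) (d n).

Definition int_part B (x : nat -> nat) := \sum_(m < B) x m %/ d m * c m.
Definition residue_size B (x : nat -> nat) := \sum_(m < B) x m %% d m.

Lemma int_part_addr B (x y : nat -> nat) :
  int_part B (fun m => x m + y m) =
  int_part B x + int_part B (fun m => x m %% d m + y m).
Proof.
rewrite /int_part -big_split; apply: eq_bigr => m _ /=.
by rewrite {1}(divn_eq (x m) (d m)) -addnA divnMDl // mulnDl.
Qed.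

Lemma residue_size_addr B (x y : nat -> nat) :
  int_part B (fun m => x m + y m) = int_part B x ->
  residue_size B (fun m => x m + y m) = residue_size B x + \sum_(m < B) y m.
Proof.
rewrite int_part_addr -[RHS]addn0 => /addnI /eqP.
rewrite sum_nat_eq0 => /forallP carry0.
rewrite /residue_size -big_split; apply: eq_bigr => m _ /=.
have /= := carry0 m; rewrite muln_eq0 (eqn0Ngt (c m)) c_gt0 orbF.
rewrite -leqn0 -ltnS ltn_divLR // mul1n => lt_d.
by rewrite -modnDml modn_small.
Qed.

Local Open Scope ring_scope.

Definition atom n : rat := (c n)%:R / (d n)%:R.

Lemma atom_mulrn_d n : atom n *+ d n = (c n)%:R.
Proof. by rewrite /atom -[_ *+ d n]mulr_natr mulfVK // pnatr_eq0 -lt0n. Qed.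

Lemma sum_atoms_int_part B (x : nat -> nat) :
  \sum_(m < B) atom m *+ x m =
  (int_part B x)%:R + \sum_(m < B) atom m *+ (x m %% d m).
Proof.
rewrite /int_part natr_sum -big_split; apply: eq_bigr => m _ /=.
by rewrite {1}(divn_eq (x m) (d m)) mulrnDr mulnC mulrnA atom_mulrn_d natrM mulr_natl.
Qed.

Lemma sum_atoms_scaled B (x : nat -> nat) :
  (\sum_(m < B) atom m *+ x m) * (\prod_(j < B) d j)%:R =
  (\sum_(m < B) x m * c m * \prod_(j < B | j != m) d j)%:R.
Proof.
rewrite mulr_suml natr_sum; apply: eq_bigr => m _.
rewrite (bigD1 m) //= !natrM -mulr_natl /atom.
have : (d m)%:R != 0 :> rat by rewrite pnatr_eq0 -lt0n.
by move=> ?; field.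
Qed.

Lemma scaled_sum_mod B (x : nat -> nat) (n : 'I_B) :
  (\sum_(m < B) x m * c m * \prod_(j < B | j != m) d j =
   x n * (c n * \prod_(j < B | j != n) d j) %[mod d n])%N.
Proof.
rewrite (bigD1 n) //= -modnDmr.
have /eqP -> : (d n %| \sum_(m < B | m != n) x m * c m * \prod_(j < B | j != m) d j)%N.
  apply: dvdn_sum => m m_n.
  by rewrite dvdn_mull // (bigD1 n) 1?eq_sym //= dvdn_mulr.
by rewrite addn0 mulnA.
Qed.

Lemma coprime_d_cofactor B (n : 'I_B) :
  coprime (c n * \prod_(j < B | j != n) d j) (d n).
Proof.
rewrite coprimeMl cd_coprime /=; apply: (big_ind (coprime ^~ (d n))).
- exact: coprime1n.
- by move=> a b; rewrite coprimeMl => -> ->.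
- by move=> j j_n; apply: d_coprime => /val_inj /eqP; rewrite (negbTE j_n).
Qed.

Lemma sum_atoms_residue B (x y : nat -> nat) :
  \sum_(m < B) atom m *+ x m = \sum_(m < B) atom m *+ y m ->
  forall n : 'I_B, (x n = y n %[mod d n])%N.
Proof.
move=> /(congr1 ( *%R^~ (\prod_(j < B) d j)%:R)) /=.
rewrite !sum_atoms_scaled => /eqP; rewrite eqr_nat => /eqP xy n.
apply/eqP; rewrite -(eqn_modMr_coprime _ _ (coprime_d_cofactor n)).
by rewrite -!scaled_sum_mod xy.
Qed.

Lemma sum_atoms_measures B (x y : nat -> nat) :
  \sum_(m < B) atom m *+ x m = \sum_(m < B) atom m *+ y m ->
  int_part B x = int_part B y /\ residue_size B x = residue_size B y.
Proof.
move=> xy; have res := sum_atoms_residue xy.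
have res_eq : residue_size B x = residue_size B y.
  by apply: eq_bigr => m _; apply: res.
split=> //; apply/eqP; rewrite -(eqr_nat rat); apply/eqP.
move: xy; rewrite !sum_atoms_int_part.
by under eq_bigr do rewrite res; move/addIr.
Qed.

Local Close Scope ring_scope.

Definition int_part_seq s := int_part (index_bound s) (fun m => count_mem m s).
Definition residue_size_seq s := residue_size (index_bound s) (fun m => count_mem m s).

Lemma int_part_seqE s B :
  index_bound s <= B -> int_part B (fun m => count_mem m s) = int_part_seq s.
Proof.
rewrite /int_part_seq /int_part.
by apply: (@sum_count_widen (fun m k => k %/ d m * c m)) => m; rewrite div0n.
Qed.

Lemma residue_size_seqE s B :
  index_bound s <= B -> residue_size B (fun m => count_mem m s) = residue_size_seq s.
Proof.
rewrite /residue_size_seq /residue_size.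
by apply: (@sum_count_widen (fun m k => k %% d m)) => m; rewrite mod0n.
Qed.

Lemma sum_atoms_seq_step (s s' t : seq nat) :
  (\sum_(i <- s) atom i = \sum_(i <- s') atom i + \sum_(i <- t) atom i)%R ->
  int_part_seq s' <= int_part_seq s /\
  (int_part_seq s' = int_part_seq s ->
   residue_size_seq s' + size t = residue_size_seq s).
Proof.
pose B := index_bound (s ++ s' ++ t).
have [le_sB le_s'B] : index_bound s <= B /\ index_bound s' <= B.
  by rewrite /B !index_bound_cat; split; lia.
have sum_countB u : {subset u <= s ++ s' ++ t} ->
    (\sum_(i <- u) atom i = \sum_(m < B) atom m *+ count_mem (m : nat) u)%R.
  by move=> sub_u; apply: sum_seq_count => i /sub_u /index_bound_gt.
rewrite -big_cat !sum_countB => [value_eq|i|i]; last 2 first.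
- by rewrite !mem_cat => ->; rewrite ?orbT.
- by rewrite mem_cat => ->.
pose y m := count_mem m s' + count_mem m t.
have [int_eq res_eq] : int_part B (fun m => count_mem m s) = int_part B y /\
                      residue_size B (fun m => count_mem m s) = residue_size B y.
  by apply: sum_atoms_measures; rewrite value_eq; apply: eq_bigr => m _; rewrite count_cat.
rewrite -(int_part_seqE le_sB) -(int_part_seqE le_s'B) -(residue_size_seqE le_sB).
rewrite -(residue_size_seqE le_s'B) int_eq res_eq.
split=> [|/esym carry0]; first by rewrite int_part_addr leq_addr.
rewrite (residue_size_addr carry0) (sum_count_size (s := t)) // => i i_t.
by apply: index_bound_gt; rewrite !mem_cat i_t !orbT.
Qed.

End AlmostReciprocal.

Theorem theorem4p5 (c d : nat -> nat) :
  almost_reciprocal_data c d -> ACCP (almost_reciprocal_PM c d).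
Proof.
move=> [d_gt0 _ d_coprime c_gt0 cd_coprime] r r_in r_chain.
have S_ex k : exists s, r k == (\sum_(i <- s) atom c d i)%R.
  by have [s ->] := r_in k; exists s.
have T_ex k : exists t, r k == (r k.+1 + \sum_(i <- t) atom c d i)%R.
  have [|_ [[t ->] ->]] := r_chain k (r k); last by exists t.
  by exists 0%R; split; [exists [::]; rewrite big_nil | rewrite addr0].
pose S k := xchoose (S_ex k); pose T k := xchoose (T_ex k).
have r_step k : r k = (r k.+1 + \sum_(i <- T k) atom c d i)%R.
  exact/eqP/(xchooseP (T_ex k)).
have value_step k : (\sum_(i <- S k) atom c d i =
    \sum_(i <- S k.+1) atom c d i + \sum_(i <- T k) atom c d i)%R.
  by rewrite -!(eqP (xchooseP (S_ex _))) -r_step.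
have step k := sum_atoms_seq_step d_gt0 c_gt0 d_coprime cd_coprime (value_step k).
have [K stat] := lex_nonincreasing_stationary (fun k => (step k).1)
  (fun k f_eq => (leq_trans (leq_addr _ _) (eq_leq ((step k).2 f_eq)))).
have r_step_const k : K <= k -> r k.+1 = r k.
  move=> K_k; have [f_k g_k] := stat k K_k.
  have [f_k1 g_k1] := stat k.+1 (leqW K_k).
  have /eqP := (step k).2 (etrans f_k1 (esym f_k)).
  rewrite g_k1 -g_k -{2}[residue_size_seq _ _]addn0 eqn_add2l size_eq0.
  by move=> /eqP T_nil; rewrite [r k]r_step T_nil big_nil addr0.
by exists K => k /(stationary_of_step r_step_const) -> x.
Qed.
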